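(* Let $\mathcal{C}$ be a concept class over $\{\pm1\}^n$, $\mathcal{D}$ a class of distributions closed under restrictions, and $D^\star$ a distribution that has a depth-$d$, size-$s$ subcube partition $L^\star=(\rho_1,\dots,\rho_s)$ into $\mathcal{D}$ (ordered arbitrarily). Let $A$ be a base learner that learns $\mathcal{C}$ over distributions in $\mathcal{D}$ to expected error $\le\frac{\varepsilon}{\log(1/\varepsilon)}$ with sample complexity $m$. Let \[ m_{\mathrm{train}}\ge s\cdot\frac{\log(1/\varepsilon)}{\varepsilon}\cdot\max(2m,8), \] let $f\in\mathcal{C}$, let $S_{\mathrm{train}}$ consist of $m_{\mathrm{train}}$ i.i.d. examples from $D^\star_f$, and let $\mathcal{H}$ be the random mapping $\rho\mapsto A((S_{\mathrm{train}})_\rho)$ over all restrictions $\rho$ of depth $\le d$ (randomness from $S_{\mathrm{train}}$ and $A$). Then \[ \mathbb{E}_{\mathcal{H}}\left[\mathrm{error}(L^\star\circ\mathcal{H},D^\star_f)\right]\le\frac{2\varepsilon}{\log(1/\varepsilon)}. \]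
   Context: A restriction is $\rho\in\{\pm1,\star\}^n$; $x\in\rho$ means $x_i=\rho_i$ or $\rho_i=\star$ for all $i$; depth of $\rho$ = number of non-$\star$ coordinates. $D_\rho$ is $D$ conditioned on $x\in\rho$; for labeled $S$, $S_\rho=\{(x,y)\in S:x\in\rho\}$. $\mathcal{D}$ is closed under restrictions if $D\in\mathcal{D}\Rightarrow D_\rho\in\mathcal{D}$ for all $\rho$. $D_f$ is the distribution of $(x,f(x))$, $x\sim D$; $\mathrm{error}(h,P)=\Pr_{(x,y)\sim P}[h(x)\neq y]$ ($\bot$ counts as an error). $A$ learns $\mathcal{C}$ to expected error $\varepsilon'$ over $D$ with $m$ samples if for every $f\in\mathcal{C}$, given (at least) $m$ i.i.d. samples from $D_f$, its output $h$ has $\mathbb{E}[\mathrm{error}(h,D_f)]\le\varepsilon'$. $D^\star$ has a depth-$d$, size-$s$ subcube partition into $\mathcal{D}$ if there are $s$ pairwise disjoint restrictions $\rho_1,\dots,\rho_s$, each of depth $\le d$, such that every $x$ in the support of $D^\star$ lies in some $\rho_i$ and $(D^\star)_{\rho_i}\in\mathcal{D}$ for all $i$. For an ordered list $L$ of restrictions, $L\circ\mathcal{H}(x)=\mathcal{H}(\rho)(x)$ for the first $\rho\in L$ containing $x$, and $\bot$ if none does. *)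

From HB Require Import structures.
From mathcomp Require Import all_boot all_order all_algebra.
From mathcomp Require Import all_classical all_reals.
From mathcomp Require Import exp.
Set Implicit Arguments. Unset Strict Implicit. Unset Printing Implicit Defensive.
Import Order.TTheory GRing.Theory Num.Theory.
Local Open Scope ring_scope.

(* Points of {+-1}^n, encoded as boolean vectors (true = +1, false = -1). *)
Definition X (n : nat) : finType := {ffun 'I_n -> bool}.
(* Restrictions rho in {+-1,*}^n: None = star, Some b = fixed value. *)
Definition Rst (n : nat) : finType := {ffun 'I_n -> option bool}.
(* Hypotheses: maps X -> {+-1} u {bot}; None = bot. *)
Definition Hyp (n : nat) : finType := {ffun X n -> option bool}.

Definition inrst n (x : X n) (rho : Rst n) : bool :=
  [forall i, if rho i is Some b then x i == b else true].

Definition depth n (rho : Rst n) : nat := #|[set i | rho i != None]|.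

Section Prob.
Variable R : realType.

Definition isDist (T : finType) (P : {ffun T -> R}) : Prop :=
  (forall t, 0 <= P t) /\ \sum_t P t = 1.

Definition mass n (D : {ffun X n -> R}) (rho : Rst n) : R :=
  \sum_(x | inrst x rho) D x.

(* D_rho : D conditioned on x \in rho (meaningful when mass D rho > 0) *)
Definition cond n (D : {ffun X n -> R}) (rho : Rst n) : {ffun X n -> R} :=
  [ffun x => if inrst x rho then D x / mass D rho else 0].

Definition closed_under_restr n (Dcls : {ffun X n -> R} -> Prop) : Prop :=
  forall D rho, Dcls D -> 0 < mass D rho -> Dcls (cond D rho).

(* error(h, D_f) = Pr_{x ~ D}[h x <> f x], bot counting as an error *)
Definition err n (h : X n -> option bool) (D : {ffun X n -> R}) (f : X n -> bool) : R :=
  \sum_x D x * (h x != Some (f x))%:R.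

Definition Esample n (D : {ffun X n -> R}) (k : nat) (F : k.-tuple (X n) -> R) : R :=
  \sum_(t : k.-tuple (X n)) (\prod_(x <- t) D x) * F t.
Arguments Esample : clear implicits.
Arguments Esample {n} D k F.

Definition labeled n (f : X n -> bool) (s : seq (X n)) : seq (X n * bool) :=
  [seq (x, f x) | x <- s].

Definition restr_sample n (S : seq (X n * bool)) (rho : Rst n) : seq (X n * bool) :=
  [seq p <- S | inrst p.1 rho].

(* A (randomized: output is a distribution over hypotheses) learns C to
   expected error eps' over every D in Dcls with m samples. *)
Definition learns n (C : (X n -> bool) -> Prop) (Dcls : {ffun X n -> R} -> Prop)
    (A : seq (X n * bool) -> {ffun Hyp n -> R}) (m : nat) (eps' : R) : Prop :=
  forall D, Dcls D -> forall f, C f -> forall k, (m <= k)%N ->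
    Esample D k (fun t => \sum_(h : Hyp n) A (labeled f t) h * err h D f) <= eps'.

Definition subcube_partition n (Dcls : {ffun X n -> R} -> Prop)
    (Dstar : {ffun X n -> R}) (d s : nat) (L : s.-tuple (Rst n)) : Prop :=
  [/\ (forall i j : 'I_s, i != j -> forall x, ~~ (inrst x (tnth L i) && inrst x (tnth L j))),
      (forall i, (depth (tnth L i) <= d)%N),
      (forall x, 0 < Dstar x -> exists i, inrst x (tnth L i)) &
      (forall i, 0 < mass Dstar (tnth L i) -> Dcls (cond Dstar (tnth L i)))].

Definition compL n (L : seq (Rst n)) (H : Rst n -> Hyp n) (x : X n) : option bool :=
  if [seq rho <- L | inrst x rho] is rho :: _ then H rho x else None.

(* E_H[error(L o H, Dstar_f)], where S_train ~ (Dstar_f)^mtrain and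
   H rho = A((S_train)_rho), with independent runs of A for distinct rho. *)
Definition expected_error n (A : seq (X n * bool) -> {ffun Hyp n -> R})
    (Dstar : {ffun X n -> R}) (f : X n -> bool) (L : seq (Rst n)) (mtrain : nat) : R :=
  Esample Dstar mtrain (fun t =>
    let S := labeled f t in
    \sum_(H : {ffun Rst n -> Hyp n})
       (\prod_(rho : Rst n) A (restr_sample S rho) (H rho)) * err (compL L H) Dstar f).

End Prob.

(* Write eps' = eps / ln(1/eps) and p_i = Pr[rho_i].  The error of L o H is at most the sum
   over the pieces of the error of H rho_i on rho_i, and since the hypotheses H rho are drawn
   independently, the i-th term only involves A((S_train)_rho_i).  The subsample
   (S_train)_rho_i consists of K ~ Bin(m_train, p_i) i.i.d. draws from (D* )_rho_i.  When
   K >= m the base learner contributes p_i eps'; otherwise the piece costs at most p_i, and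
   p_i Pr[K < m] <= eps'/s: either p_i <= eps'/s, or m_train p_i >= 2m and Chebyshev gives
   Pr[K < m] <= 4 / (m_train p_i) <= eps' / (s p_i).  Summing over the s pieces yields
   eps' + eps'. *)

From HB Require Import structures.
From mathcomp Require Import all_boot all_order all_algebra.
From mathcomp Require Import all_classical all_reals.
From mathcomp Require Import exp lra ring.
Import Order.TTheory GRing.Theory Num.Theory.
Local Open Scope ring_scope.
Set Implicit Arguments. Unset Strict Implicit.

Lemma sum_tupleS (V : nmodType) (T : finType) k (F : k.+1.-tuple T -> V) :
  \sum_(t : k.+1.-tuple T) F t = \sum_(x : T) \sum_(t : k.-tuple T) F (cons_tuple x t).
Proof.
rewrite pair_big /= (reindex (fun p : T * k.-tuple T => cons_tuple p.1 p.2)) //=.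
exists (fun t : k.+1.-tuple T => (thead t, behead_tuple t)).
  by move=> [x t] _ /=; congr pair; apply: val_inj.
by move=> t _; rewrite [RHS]tuple_eta; apply: val_inj.
Qed.

Section IidSample.
Variables (R : realType) (n : nat).
Implicit Types (D : {ffun X n -> R}) (G : seq (X n) -> R).

Fixpoint Eiid D k G : R :=
  if k is k'.+1 then \sum_x D x * Eiid D k' (fun u => G (x :: u)) else G [::].

Lemma Esample_Eiid D k G : Esample D (fun t : k.-tuple (X n) => G t) = Eiid D k G.
Proof.
elim: k G => [|k IH] G /=.
  rewrite /Esample (big_pred1 [tuple]) ?big_nil ?mul1r // => t.
  by symmetry; apply/eqP/val_inj; case: t => -[].
rewrite /Esample sum_tupleS; apply: eq_bigr => x _.
rewrite -IH /Esample mulr_sumr; apply: eq_bigr => t _.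
by rewrite big_cons mulrA.
Qed.

Lemma ler_Eiid D k G1 G2 :
  (forall x, 0 <= D x) -> (forall u, G1 u <= G2 u) -> Eiid D k G1 <= Eiid D k G2.
Proof.
move=> D_ge0; elim: k G1 G2 => [|k IH] G1 G2 leG //=.
by apply: ler_sum => x _; apply: ler_wpM2l => //; apply: IH.
Qed.

Lemma Eiid_sum D k (I : finType) (G : I -> seq (X n) -> R) :
  Eiid D k (fun u => \sum_i G i u) = \sum_i Eiid D k (G i).
Proof.
elim: k G => [|k IH] G //=.
under eq_bigr => x _ do rewrite IH mulr_sumr.
exact: exchange_big.
Qed.

Lemma EiidZ D k c G : Eiid D k (fun u => c * G u) = c * Eiid D k G.
Proof.
elim: k G => [|k IH] G //=.
by rewrite mulr_sumr; apply: eq_bigr => x _; rewrite IH mulrCA.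
Qed.

Lemma Eiid_cst D k c : \sum_x D x = 1 -> Eiid D k (fun _ => c) = c.
Proof.
move=> D1; elim: k => [|k IH] //=.
by under eq_bigr => x _ do rewrite IH; rewrite -mulr_suml D1 mul1r.
Qed.

End IidSample.

Section Binomial.
Variables (R : realFieldType) (p q : R).
Implicit Types g : nat -> R.

(* For [q = 1 - p], [Ebin N g] is the expectation of [g] under Bin(N, p). *)
Fixpoint Ebin N g : R :=
  if N is N'.+1 then p * Ebin N' (fun k => g k.+1) + q * Ebin N' g else g 0%N.

Lemma ler_Ebin N g1 g2 :
  0 <= p -> 0 <= q -> (forall k, g1 k <= g2 k) -> Ebin N g1 <= Ebin N g2.
Proof.
move=> p_ge0 q_ge0; elim: N g1 g2 => [|N IH] g1 g2 leg //=.
by apply: lerD; apply: ler_wpM2l => //; apply: IH.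
Qed.

Lemma Ebin_sum N (I : finType) (G : I -> nat -> R) :
  Ebin N (fun k => \sum_i G i k) = \sum_i Ebin N (G i).
Proof.
elim: N G => [|N IH] G //=.
by rewrite !IH !mulr_sumr -big_split.
Qed.

Lemma EbinD N g1 g2 : Ebin N (fun k => g1 k + g2 k) = Ebin N g1 + Ebin N g2.
Proof. by elim: N g1 g2 => [|N IH] g1 g2 //=; rewrite !IH; ring. Qed.

Lemma EbinZ N c g : Ebin N (fun k => c * g k) = c * Ebin N g.
Proof. by elim: N g => [|N IH] g //=; rewrite !IH; ring. Qed.

Hypothesis pq1 : p + q = 1.

Lemma Ebin_cst N c : Ebin N (fun _ => c) = c.
Proof. by elim: N => [|N /= ->] //; rewrite -mulrDl pq1 mul1r. Qed.

Lemma Ebin_sqr N c :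
  Ebin N (fun k => (k%:R - c) ^+ 2) = (N%:R * p - c) ^+ 2 + N%:R * p * q.
Proof.
elim: N c => [|N IH] c /=; first by ring.
have -> : (fun k => (k.+1%:R - c) ^+ 2) = (fun k => (k%:R - (c - 1)) ^+ 2 :> R).
  by apply/funext => k; rewrite -natr1; ring.
rewrite !IH -natr1.
have -> : q = 1 - p by rewrite -pq1 addrC addKr.
ring.
Qed.

Lemma Ebin_ltn_le N m :
  0 <= p -> 0 <= q -> m%:R < N%:R * p ->
  Ebin N (fun k => (k < m)%:R) <= N%:R * p * q / (N%:R * p - m%:R) ^+ 2.
Proof.
set c := N%:R * p => p_ge0 q_ge0 m_lt_c.
have gap_gt0 : 0 < (c - m%:R) ^+ 2 by rewrite exprn_gt0 // subr_gt0.
rewrite ler_pdivlMr // mulrC -EbinZ.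
apply: le_trans (ler_Ebin (g2 := fun k => (k%:R - c) ^+ 2) _ p_ge0 q_ge0 _) _.
  move=> k; case: ltnP => [k_lt_m|_]; last by rewrite mulr0 sqr_ge0.
  have : k.+1%:R <= m%:R :> R by rewrite ler_nat.
  rewrite -natr1 mulr1 => km; nra.
by rewrite Ebin_sqr -/c subrr expr0n add0r.
Qed.

Lemma mass_Ebin_ltn_le N m a :
  0 <= p -> 0 <= q -> 0 < a -> 2 * m%:R <= N%:R * a -> 4 <= N%:R * a ->
  p * Ebin N (fun k => (k < m)%:R) <= a.
Proof.
move=> p_ge0 q_ge0 a_gt0 m_small N_large.
set P := Ebin N _.
have P_ge0 : 0 <= P by rewrite -(Ebin_cst N 0); apply: ler_Ebin => // k.
have P_le1 : P <= 1 by rewrite -(Ebin_cst N 1); apply: ler_Ebin => // k; case: ltnP.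
have [p_le_a|a_lt_p] := lerP p a.
  by apply: le_trans p_le_a; rewrite ler_piMr.
have N_gt0 : 0 < N%:R :> R by rewrite -(pmulr_lgt0 _ a_gt0); lra.
set c := N%:R * p.
have Na_lt_c : N%:R * a < c by rewrite ltr_pM2l.
have cheb : P * (c - m%:R) ^+ 2 <= c * q.
  have m_ge0 : 0 <= m%:R :> R by [].
  have m_lt_c : m%:R < c by lra.
  by rewrite -ler_pdivlMr ?exprn_gt0 ?subr_gt0 //; apply: Ebin_ltn_le.
have q_le1 : q <= 1 by rewrite -pq1 lerDr.
have c_gt0 : 0 < c by lra.
have half_gap : c ^+ 2 <= 4 * (c - m%:R) ^+ 2 by nra.
have : c * (c * P) <= c * 4 by nra.
rewrite ler_pM2l // => cP_le4.
by rewrite -(ler_pM2l N_gt0) mulrA -/c; lra.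
Qed.

End Binomial.

Section Restriction.
Variables (R : realType) (n : nat).
Implicit Types (D : {ffun X n -> R}) (rho : Rst n).

Lemma Eiid_filter D rho N (G : seq (X n) -> R) :
  mass D rho != 0 ->
  Eiid D N (fun u => G [seq x <- u | inrst x rho]) =
  Ebin (mass D rho) (\sum_(x | ~~ inrst x rho) D x) N (fun k => Eiid (cond D rho) k G).
Proof.
move=> mass_neq0; elim: N G => [|N IH] G //=.
rewrite (bigID (fun x => inrst x rho)) /=; congr (_ + _); last first.
  by rewrite mulr_suml; apply: eq_bigr => x /negbTE x_out; rewrite x_out IH.
rewrite Ebin_sum mulr_sumr [RHS](bigID (fun x => inrst x rho)) /=.
rewrite [X in _ = _ + X]big1 ?addr0 => [|x /negbTE x_out]; last first.
  by rewrite EbinZ ffunE x_out mul0r mulr0.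
apply: eq_bigr => x x_in; rewrite x_in (IH (fun u => G (x :: u))) EbinZ ffunE x_in.
by rewrite mulrA mulrCA mulfV // mulr1.
Qed.

Lemma cond_isDist D rho : isDist D -> 0 < mass D rho -> isDist (cond D rho).
Proof.
move=> [D_ge0 D1] mass_gt0; split => [x|].
  by rewrite ffunE; case: ifP => // _; rewrite divr_ge0 // ltW.
rewrite (bigID (fun x => inrst x rho)) /= [X in _ + X]big1 ?addr0 => [|x /negbTE x_out]; last first.
  by rewrite ffunE x_out.
under eq_bigr => x x_in do rewrite ffunE x_in.
by rewrite -mulr_suml divff // gt_eqF.
Qed.

Lemma Eiid_filter_le D rho N m eps' (Phi : seq (X n) -> R) :
  isDist D -> 0 <= eps' -> (forall u, Phi u <= mass D rho) ->
  (0 < mass D rho -> forall k, (m <= k)%N ->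
     Eiid (cond D rho) k Phi <= mass D rho * eps') ->
  Eiid D N (fun u => Phi [seq x <- u | inrst x rho]) <=
  mass D rho * eps' + mass D rho * Ebin (mass D rho) (1 - mass D rho) N (fun k => (k < m)%:R).
Proof.
move=> [D_ge0 D1] eps'_ge0 Phi_le learner.
have [mass_gt0|mass_le0] := ltrP 0 (mass D rho); last first.
  have mass0 : mass D rho = 0 by apply/le_anti; rewrite mass_le0 sumr_ge0.
  rewrite mass0 !mul0r addr0 -(Eiid_cst N 0 D1).
  by apply: ler_Eiid => // u; rewrite -mass0.
have [cond_ge0 cond1] := cond_isDist (conj D_ge0 D1) mass_gt0.
have out_mass : \sum_(x | ~~ inrst x rho) D x = 1 - mass D rho.
  have split : \sum_x D x = mass D rho + \sum_(x | ~~ inrst x rho) D x.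
    by rewrite (bigID (fun x => inrst x rho)).
  by rewrite -D1 split addrAC subrr add0r.
rewrite Eiid_filter ?gt_eqF // out_mass.
set p := mass D rho in Phi_le learner mass_gt0 out_mass *.
have q_ge0 : 0 <= 1 - p by rewrite -out_mass sumr_ge0.
apply: le_trans (ler_Ebin (g2 := fun k => p * eps' + p * (k < m)%:R) _ _ _ _) _ => //.
- exact: ltW.
- move=> k; case: ltnP => [k_lt_m|m_le_k]; last by rewrite mulr0 addr0 learner.
  rewrite mulr1; apply: le_trans (ler_Eiid k cond_ge0 Phi_le) _.
  by rewrite Eiid_cst // lerDr mulr_ge0 // ltW.
- by rewrite EbinD Ebin_cst ?EbinZ // addrC subrK.
Qed.

End Restriction.

Lemma sum_ffun_prod_marginal (R : comPzSemiRingType) (I J : finType)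
    (a : I -> J -> R) (g : J -> R) (i0 : I) :
  (forall i, \sum_j a i j = 1) ->
  \sum_(H : {ffun I -> J}) (\prod_i a i (H i)) * g (H i0) = \sum_j a i0 j * g j.
Proof.
move=> a1.
pose b i j := if i == i0 then a i j * g j else a i j.
have prod_b H : (\prod_i a i (H i)) * g (H i0) = \prod_i b i (H i).
  rewrite (bigD1 i0) // [RHS](bigD1 i0) //= /b eqxx mulrAC; congr (_ * _).
  by apply: eq_bigr => i /negbTE ->.
under eq_bigr do rewrite prod_b.
rewrite -bigA_distr_bigA (bigD1 i0) //= [X in _ * X]big1 ?mulr1 => [|i /negbTE i_neq].
  by apply: eq_bigr => j _; rewrite /b eqxx.
by rewrite -(a1 i); apply: eq_bigr => j _; rewrite /b i_neq.
Qed.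

Section Error.
Variables (R : realType) (n : nat).
Implicit Types (D : {ffun X n -> R}) (f : X n -> bool) (rho : Rst n).

Definition err_in (h : X n -> option bool) D f rho : R :=
  \sum_(x | inrst x rho) D x * (h x != Some (f x))%:R.

Lemma err_inE h D f rho :
  0 < mass D rho -> err_in h D f rho = mass D rho * err h (cond D rho) f.
Proof.
move=> mass_gt0; rewrite /err mulr_sumr (bigID (fun x => inrst x rho)) /=.
rewrite [X in _ = _ + X]big1 ?addr0 => [|x /negbTE x_out]; last first.
  by rewrite ffunE x_out mul0r mulr0.
apply: eq_bigr => x x_in; rewrite ffunE x_in.
by rewrite mulrA mulrCA mulfV ?gt_eqF // mulr1.
Qed.

Lemma err_in_le_mass h D f rho : (forall x, 0 <= D x) -> err_in h D f rho <= mass D rho.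
Proof. by move=> D_ge0; apply: ler_sum => x _; rewrite ler_piMr // lern1 leq_b1. Qed.

Lemma err_compL_le s (L : s.-tuple (Rst n)) (H : {ffun Rst n -> Hyp n}) D f :
  (forall x, 0 <= D x) -> (forall x, 0 < D x -> exists i, inrst x (tnth L i)) ->
  err (compL L H) D f <= \sum_(i < s) err_in (H (tnth L i)) D f (tnth L i).
Proof.
move=> D_ge0 L_cover; rewrite /err_in.
under eq_bigr do rewrite big_mkcond /=.
rewrite /err exchange_big /=; apply: ler_sum => x _.
have [Dx_gt0|Dx_le0] := ltrP 0 (D x); last first.
  have -> : D x = 0 by apply/le_anti; rewrite Dx_le0 D_ge0.
  by rewrite mul0r sumr_ge0 // => i _; case: ifP; rewrite ?mul0r.
have [i x_in] := L_cover x Dx_gt0.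
rewrite /compL; case E: [seq rho <- L | inrst x rho] => [|rho rhos].
  have : tnth L i \in [seq rho <- L | inrst x rho] by rewrite mem_filter x_in mem_tnth.
  by rewrite E.
have : rho \in [seq rho <- L | inrst x rho] by rewrite E mem_head.
rewrite mem_filter => /andP[x_in_rho /tnthP[j rho_j]]; subst rho.
rewrite (bigD1 j) //= x_in_rho lerDl.
by apply: sumr_ge0 => k _; case: ifP; rewrite // mulr_ge0.
Qed.

End Error.

Section Learning.
Variables (R : realType) (n : nat).
Implicit Types (D : {ffun X n -> R}) (f : X n -> bool) (rho : Rst n).

Lemma sum_mass_le1 s (L : s.-tuple (Rst n)) D :
  isDist D ->
  (forall i j : 'I_s, i != j -> forall x, ~~ (inrst x (tnth L i) && inrst x (tnth L j))) ->
  \sum_(i < s) mass D (tnth L i) <= 1.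
Proof.
move=> [D_ge0 D1] L_disj.
under eq_bigr do rewrite /mass big_mkcond /=.
rewrite exchange_big -D1 /=; apply: ler_sum => x _.
have [i /= x_in|x_out] := pickP (fun i => inrst x (tnth L i)); last first.
  by rewrite big1 // => i _; rewrite x_out.
rewrite (bigD1 i) //= x_in big1 ?addr0 // => j j_neq_i.
by have := L_disj i j; rewrite eq_sym j_neq_i => /(_ isT x); rewrite x_in /= => /negbTE ->.
Qed.

Lemma restr_sample_labeled f (u : seq (X n)) rho :
  restr_sample (labeled f u) rho = labeled f [seq x <- u | inrst x rho].
Proof. by rewrite /restr_sample /labeled filter_map. Qed.

Lemma expected_error_le s (L : s.-tuple (Rst n)) A D f N :
  (forall S, isDist (A S)) -> (forall x, 0 <= D x) ->
  (forall x, 0 < D x -> exists i, inrst x (tnth L i)) ->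
  expected_error A D f L N <=
  Eiid D N (fun u => \sum_(i < s) \sum_h
    A (labeled f [seq x <- u | inrst x (tnth L i)]) h * err_in h D f (tnth L i)).
Proof.
move=> A_dist D_ge0 L_cover; rewrite /expected_error -Esample_Eiid.
apply: ler_sum => u _; apply: ler_wpM2l; first by apply: prodr_ge0.
set weight := fun (H : {ffun Rst n -> Hyp n}) =>
  \prod_rho A (restr_sample (labeled f u) rho) (H rho).
have marginal : \sum_H weight H * \sum_(i < s) err_in (H (tnth L i)) D f (tnth L i) =
    \sum_(i < s) \sum_h A (labeled f [seq x <- u | inrst x (tnth L i)]) h
                          * err_in h D f (tnth L i).
  under eq_bigr do rewrite mulr_sumr.
  rewrite exchange_big; apply: eq_bigr => i _ /=.
  rewrite (@sum_ffun_prod_marginal _ _ _ (fun rho h => A (restr_sample (labeled f u) rho) h)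
                                     (fun h => err_in h D f (tnth L i))).
    by rewrite restr_sample_labeled.
  by move=> rho; case: (A_dist (restr_sample (labeled f u) rho)).
rewrite -marginal; apply: ler_sum => H _; apply: ler_wpM2l; last exact: err_compL_le.
by apply: prodr_ge0 => rho _; case: (A_dist (restr_sample (labeled f u) rho)).
Qed.

Lemma Eiid_learner_le C Dcls A m eps' f D rho k :
  learns C Dcls A m eps' -> C f -> Dcls (cond D rho) -> 0 < mass D rho -> (m <= k)%N ->
  Eiid (cond D rho) k (fun u => \sum_h A (labeled f u) h * err_in h D f rho) <=
  mass D rho * eps'.
Proof.
move=> learnsA Cf Dcls_cond mass_gt0 m_le_k.
have -> : (fun u => \sum_h A (labeled f u) h * err_in h D f rho) =
          (fun u => mass D rho * \sum_h A (labeled f u) h * err h (cond D rho) f).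
  by apply/funext => u; rewrite mulr_sumr; apply: eq_bigr => h _; rewrite err_inE // mulrCA.
rewrite EiidZ ler_pM2l // -Esample_Eiid.
exact: learnsA _ Dcls_cond _ Cf _ m_le_k.
Qed.

Lemma piece_error_le C Dcls A m eps' a f D rho N :
  isDist D -> (forall S, isDist (A S)) -> learns C Dcls A m eps' -> C f ->
  (0 < mass D rho -> Dcls (cond D rho)) -> 0 <= eps' -> 0 < a ->
  2 * m%:R <= N%:R * a -> 4 <= N%:R * a ->
  Eiid D N (fun u => \sum_h A (labeled f [seq x <- u | inrst x rho]) h * err_in h D f rho)
  <= mass D rho * eps' + a.
Proof.
move=> D_dist A_dist learnsA Cf Dcls_cond eps'_ge0 a_gt0 m_small N_large.
have [D_ge0 D1] := D_dist.
have mass_le1 : mass D rho <= 1.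
  by rewrite -D1 [leRHS](bigID (fun x => inrst x rho)) /= lerDl sumr_ge0.
pose Phi u := \sum_h A (labeled f u) h * err_in h D f rho.
apply: le_trans (Eiid_filter_le (m := m) (Phi := Phi) N D_dist eps'_ge0 _ _) _.
- move=> u; have [A_ge0 A1] := A_dist (labeled f u).
  rewrite -[leRHS]mul1r -A1 mulr_suml; apply: ler_sum => h _.
  by rewrite ler_wpM2l // err_in_le_mass.
- by move=> mass_gt0 k; apply: Eiid_learner_le learnsA Cf (Dcls_cond mass_gt0) mass_gt0.
rewrite lerD2l mass_Ebin_ltn_le ?sumr_ge0 ?subr_ge0 //.
by rewrite addrC subrK.
Qed.

End Learning.

Unset Implicit Arguments.

Theorem corollary7p4 (R : realType) (n d s m mtrain : nat) (eps : R)
    (C : (X n -> bool) -> Prop) (Dcls : {ffun X n -> R} -> Prop)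
    (Dstar : {ffun X n -> R}) (L : s.-tuple (Rst n))
    (A : seq (X n * bool) -> {ffun Hyp n -> R}) (f : X n -> bool) :
  0 < eps < 1 ->
  (forall D, Dcls D -> isDist D) ->
  closed_under_restr Dcls ->
  isDist Dstar ->
  subcube_partition Dcls Dstar d L ->
  (forall S, isDist (A S)) ->
  learns C Dcls A m (eps / ln eps^-1) ->
  s%:R * (ln eps^-1 / eps) * Num.max (2 * m%:R) 8 <= mtrain%:R ->
  C f ->
  expected_error A Dstar f L mtrain <= 2 * eps / ln eps^-1.
Proof.
move=> /andP[eps_gt0 eps_lt1] _ _ Dstar_dist [L_disj _ L_cover L_cls] A_dist learnsA
  mtrain_large Cf.
have [Dstar_ge0 _] := Dstar_dist.
have log_gt0 : 0 < ln eps^-1 by rewrite ln_gt0 // invf_gt1.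
set eps' := eps / ln eps^-1.
have eps'_gt0 : 0 < eps' by rewrite divr_gt0.
rewrite -mulrA -/eps'.
apply: le_trans (expected_error_le _ _ A_dist Dstar_ge0 L_cover) _; rewrite Eiid_sum.
apply: (le_trans (y := \sum_(i < s) (mass Dstar (tnth L i) * eps' + eps' / s%:R))).
  apply: ler_sum => i _.
  have s_gt0 : 0 < s%:R :> R by rewrite ltr0n (leq_ltn_trans _ (ltn_ord i)).
  have enough_samples : Num.max (2 * m%:R) 8 <= mtrain%:R * (eps' / s%:R).
    set K := Num.max _ _ in mtrain_large *.
    have -> : K = s%:R * (ln eps^-1 / eps) * K * (eps' / s%:R).
      by rewrite /eps'; field; rewrite !gt_eqF.
    by apply: ler_wpM2r; rewrite // ltW // divr_gt0.
  apply: piece_error_le Dstar_dist A_dist learnsA Cf (L_cls i) _ _ _ _.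
  - exact: ltW.
  - by rewrite divr_gt0.
  - by apply: le_trans enough_samples; rewrite le_max lexx.
  - by apply: le_trans enough_samples; rewrite le_max (ler_nat _ 4 8) orbT.
have mass_le1 := sum_mass_le1 Dstar_dist L_disj.
have split_eps' : (eps' / s%:R) *+ s <= eps'.
  have [->|s_gt0] := posnP s; first by rewrite mulr0n ltW.
  by rewrite -mulr_natr divfK // pnatr_eq0 -lt0n.
have : (\sum_(i < s) mass Dstar (tnth L i)) * eps' <= eps' by rewrite ler_piMl // ltW.
rewrite big_split /= -mulr_suml sumr_const card_ord; lra.
Qed.
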